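(* For every graph $G$, $mw(G) \leq pw(G)+1$, where $mw(G)$ is the matching width and $pw(G)$ the pathwidth of $G$.
   Context: For a permutation $SV=(v_1,\dots,v_n)$ of $V(G)$ and $1\le i\le n$, let $V_i=\{v_1,\dots,v_i\}$ and let $G_i$ be the graph on $V(G)$ whose edges are the edges of $G$ with one end in $V_i$ and the other in $V(G)\setminus V_i$. The matching width of $SV$ is $\max_i \nu(G_i)$, where $\nu$ denotes maximum matching size, and the matching width $mw(G)$ is the minimum of this quantity over all permutations $SV$ of $V(G)$. Pathwidth is the standard notion (minimum over path decompositions of the maximum bag size minus one). *)

(* Finite simple graphs as symmetric irreflexive relations. *)
From mathcomp Require Import all_boot fingroup perm.
Set Implicit Arguments. Unset Strict Implicit. Unset Printing Implicit Defensive.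

Section Defs.
Variable T : finType.

(* M is a matching of the graph G_A: the edges of e with one end in A and
   the other in V \ A.  Edges are 2-element vertex sets; distinct edges of
   a matching are disjoint. *)
Definition cut_matching (e : rel T) (A : {set T}) (M : {set {set T}}) : bool :=
  [forall E in M, exists x, exists y,
      [&& E == [set x; y], e x y, x \in A & y \notin A]] &&
  [forall E1 in M, forall E2 in M, (E1 != E2) ==> [disjoint E1 & E2]].

Definition nu_cut (e : rel T) (A : {set T}) : nat :=
  \max_(M : {set {set T}} | cut_matching e A M) #|M|.

(* the ordering SV induced by a permutation p: v_k = p (k-th element of enum T);
   V_i = {v_1, ..., v_i} *)
Definition Vprefix (p : {perm T}) (i : nat) : {set T} :=
  [set x in take i (map p (enum T))].

Definition mw_of (e : rel T) (p : {perm T}) : nat :=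
  \max_(1 <= i < #|T|.+1) nu_cut e (Vprefix p i).

Definition mw (e : rel T) : nat :=
  \big[minn/mw_of e 1%g]_(p : {perm T}) mw_of e p.

Definition is_path_decomp (e : rel T) (D : seq {set T}) : Prop :=
  (forall v : T, exists2 B, B \in D & v \in B) /\
  (forall x y : T, e x y -> exists2 B, B \in D & (x \in B) && (y \in B)) /\
  (forall (v : T) (i j k : nat), i <= j -> j <= k -> k < size D ->
     v \in nth set0 D i -> v \in nth set0 D k -> v \in nth set0 D j).

Definition pd_width (D : seq {set T}) : nat := (\max_(B <- D) #|B|).-1.

Definition is_pathwidth (e : rel T) (k : nat) : Prop :=
  (exists2 D, is_path_decomp e D & pd_width D = k) /\
  (forall D, is_path_decomp e D -> k <= pd_width D).

End Defs.

From mathcomp Require Import all_boot order fingroup perm.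
Set Implicit Arguments. Unset Strict Implicit. Unset Printing Implicit Defensive.
Import Order.TTheory.

(* Order the vertices by the index of the last bag containing them.  If a
   prefix A ends with a vertex whose last bag is L, then for every edge xy
   leaving A the bag of the edge comes no later than L (it contains x) and y
   still occurs at or after L, so y lies in bag L by convexity.  Distinct
   edges of a matching of the cut have distinct outer ends, hence the matching
   has at most |bag L| <= pw + 1 edges. *)

Lemma mw_le_mw_of (T : finType) (e : rel T) (p : {perm T}) : mw e <= mw_of e p.
Proof. by rewrite /mw -minEnat -leEnat; exact: bigmin_le. Qed.

Lemma perm_eq_enum_map_perm (T : finType) (s : seq T) :
  perm_eq s (enum T) -> exists p : {perm T}, map p (enum T) = s.
Proof.
move=> s_enum.
have size_s : size s = size (enum T) by rewrite (perm_size s_enum).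
have index_lt x : index x (enum T) < size s by rewrite size_s index_mem mem_enum.
pose g x := nth x s (index x (enum T)).
have g_inj : injective g.
  move=> x y; rewrite /g (set_nth_default y x (index_lt x)) => /eqP.
  rewrite nth_uniq ?(perm_uniq s_enum) ?enum_uniq // => /eqP.
  by move/(congr1 (nth x (enum T))); rewrite !nth_index ?mem_enum.
exists (perm g_inj).
have [x0 _|T_empty] := pickP (@predT T); last first.
  have enum_nil : enum T = [::] by apply/size0nil; rewrite -cardE eq_card0.
  by move: size_s; rewrite enum_nil => /size0nil ->.
apply: (@eq_from_nth _ x0) => [|k]; rewrite size_map // => k_lt.
rewrite (nth_map x0) // permE /g index_uniq ?enum_uniq //.
by rewrite (set_nth_default x0) // size_s.
Qed.

Lemma sorted_take_notin (T : eqType) (leT : rel T) (s : seq T) (i : nat) (x y : T) :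
  transitive leT -> sorted leT s ->
  x \in take i s -> y \in s -> y \notin take i s -> leT x y.
Proof.
move=> leT_tr; rewrite sorted_pairwise // -{1 3}(cat_take_drop i s).
rewrite pairwise_cat mem_cat => /and3P[/allrelP take_drop _ _] x_take.
by case/orP=> [->//|y_drop _]; exact: take_drop.
Qed.

Lemma exists_Vprefix_sorted (T : finType) (f : T -> nat) : exists p : {perm T},
  forall i x y, x \in Vprefix p i -> y \notin Vprefix p i -> f x <= f y.
Proof.
pose leT := relpre f leq.
have [p p_sort] := perm_eq_enum_map_perm (permEl (perm_sort leT (enum T))).
exists p => i x y; rewrite !inE p_sort => x_pre y_pre.
apply: (@sorted_take_notin _ leT (sort leT (enum T)) i) => //.
- by move=> a b c; exact: leq_trans.
- by apply: sort_sorted => a b; exact: leq_total.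
- by rewrite mem_sort mem_enum.
Qed.

Section CutMatching.
Variables (T : finType) (e : rel T) (A : {set T}).

Definition outer_end (E : {set T}) : option T := [pick y in E :\: A].

Lemma outer_end_edge x y : x \in A -> y \notin A -> outer_end [set x; y] = Some y.
Proof.
move=> xA yA; rewrite /outer_end; case: pickP => [z|/(_ y)].
  by rewrite !inE => /andP[zA /orP[/eqP zx|/eqP ->//]]; rewrite zx xA in zA.
by rewrite !inE eqxx orbT yA.
Qed.

Lemma cut_matching_card_le (M : {set {set T}}) (S : {set T}) :
  cut_matching e A M ->
  (forall x y, e x y -> x \in A -> y \notin A -> y \in S) -> #|M| <= #|S|.
Proof.
move=> /andP[/forall_inP M_cut /forall_inP M_disj] S_outer.
have M_edge E : E \in M -> exists x y,
    [/\ E = [set x; y], outer_end E = Some y & y \in S].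
  move=> /M_cut/existsP[x /existsP[y /and4P[/eqP -> exy xA yA]]].
  by exists x, y; rewrite outer_end_edge // (S_outer x).
have outer_inj : {in M &, injective outer_end}.
  move=> E1 E2 /[dup] E1M /M_edge[x1 [y1 [E1_eq out1 _]]] E2M.
  rewrite out1 => out2; apply/eqP; apply: contraT => E12.
  have /disjointFr E12_disj := implyP (forall_inP (M_disj E1 E1M) E2 E2M) E12.
  move: out2; rewrite /outer_end; case: pickP => // z; rewrite inE => /andP[_ zE2] [zy].
  by rewrite -zy E12_disj // E1_eq !inE eqxx orbT in zE2.
rewrite -(card_in_imset outer_inj) -(card_imset S (@Some_inj _)).
apply/subset_leq_card/subsetP => _ /imsetP[E /M_edge[x [y [_ -> yS]]] ->].
exact: imset_f.
Qed.

End CutMatching.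

Section LastBag.
Variables (T : finType) (D : seq {set T}).

Definition last_bag (v : T) : nat := \max_(j < size D | v \in nth set0 D j) j.

Lemma mem_nth_bag_lt v j : v \in nth set0 D j -> j < size D.
Proof. by case: ltnP => // ?; rewrite nth_default ?inE. Qed.

Lemma leq_last_bag v j : v \in nth set0 D j -> j <= last_bag v.
Proof.
move=> vj; have j_lt := mem_nth_bag_lt vj.
exact: (@leq_bigmax_cond _ _ (@nat_of_ord _) (Ordinal j_lt)).
Qed.

Lemma mem_last_bag v : (exists2 B, B \in D & v \in B) -> v \in nth set0 D (last_bag v).
Proof.
move=> [B BD vB]; have B_lt : index B D < size D by rewrite index_mem.
have : 0 < #|[pred j : 'I_(size D) | v \in nth set0 D j]|.
  by apply/card_gt0P; exists (Ordinal B_lt); rewrite inE /= nth_index.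
by case/(eq_bigmax_cond (@nat_of_ord _)) => j; rewrite inE /last_bag => vj ->.
Qed.

Lemma card_nth_bag_le j : #|nth set0 D j| <= \max_(B <- D) #|B|.
Proof.
case: (ltnP j (size D)) => [j_lt|j_ge]; last by rewrite nth_default ?cards0.
by apply: leq_bigmax_seq => //; exact: mem_nth.
Qed.

End LastBag.

Lemma path_decomp_edge_mem_bag (T : finType) (e : rel T) (D : seq {set T}) x y L :
  is_path_decomp e D -> e x y ->
  last_bag D x <= L <= last_bag D y -> y \in nth set0 D L.
Proof.
move=> [cover [edge convex]] exy /andP[xL Ly].
have [B BD /andP[xB yB]] := edge x y exy.
have y_last := mem_last_bag (cover y).
apply: (convex y (index B D) L (last_bag D y)) => //; last by rewrite nth_index.
- by apply: leq_trans xL; apply: leq_last_bag; rewrite nth_index.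
- exact: mem_nth_bag_lt y_last.
Qed.

Lemma nu_cut_le_max_bag (T : finType) (e : rel T) (D : seq {set T}) (A : {set T}) :
  is_path_decomp e D ->
  (forall x y, x \in A -> y \notin A -> last_bag D x <= last_bag D y) ->
  nu_cut e A <= \max_(B <- D) #|B|.
Proof.
move=> pdD A_sorted; apply/bigmax_leqP => M M_cut.
pose L := \max_(x in A) last_bag D x.
apply: leq_trans (card_nth_bag_le D L); apply: (cut_matching_card_le M_cut).
move=> x y exy xA yA; apply: (path_decomp_edge_mem_bag pdD exy).
rewrite (leq_bigmax_cond _ xA) /=.
by apply/bigmax_leqP => z zA; exact: A_sorted.
Qed.

Theorem theorem6 (T : finType) (e : rel T)
  (e_sym : symmetric e) (e_irr : irreflexive e) (pw : nat) :
  is_pathwidth e pw -> mw e <= pw + 1.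
Proof.
move=> [[D pdD widthD] _].
have [p p_sorted] := exists_Vprefix_sorted (last_bag D).
apply: leq_trans (mw_le_mw_of e p) _.
apply/bigmax_leqP_seq => i _ _.
apply: leq_trans (nu_cut_le_max_bag pdD (p_sorted i)) _.
by rewrite -widthD /pd_width addn1 leqSpred.
Qed.
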